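(* Let $q\in k^\times$ with $q\neq1$, and let $\tau_q\colon k[y]\otimes k[x]\to k[x]\otimes k[y]$ be the twisting map \[\tau_q(y^m\otimes f)=\sum_{i=0}^m \genfrac{[}{]}{0pt}{0}{m}{i}_q\,\theta^i\partial_q^{m-i}(f)\otimes y^i,\] so that $k[x]\otimes_{\tau_q}k[y]$ is the quantized Weyl algebra $A_1^q(k)=k\langle x,y\mid yx-qxy=1\rangle$. Then $\tau_q$ is continuous as a map $k[y]\otimes^!k[x]\to k[x]\otimes^!k[y]$ (for the cofinite topologies on $k[x]$ and $k[y]$) if and only if $q$ is a root of unity.
   Context: $k$ is a field with the discrete topology. $\theta$ is the automorphism $f(x)\mapsto f(qx)$ of $k[x]$ and $\partial_q$ is the $q$-derivative, $\partial_q x^n=[n]_q x^{n-1}$ with $[n]_q=1+q+\dots+q^{n-1}$. The $q$-binomial coefficient $\genfrac{[}{]}{0pt}{0}{m}{i}_q$ is obtained by evaluating at $t=q$ the integer polynomial $[m]_t!/([i]_t![m-i]_t!)$, where $[n]_t!=[n]_t[n-1]_t\cdots[1]_t$. For an algebra $R$, the cofinite topology is the linear topology whose open subspaces are those containing a two-sided ideal of finite codimension. For linearly topologized spaces $E,F$, $E\otimes^!F$ is $E\otimes F$ with the linear topology whose open subspaces contain $E_0\otimes F+E\otimes F_0$ for some open subspaces $E_0\subseteq E$, $F_0\subseteq F$. $k[x]\otimes_\tau k[y]$ is $k[x]\otimes k[y]$ with multiplication $(m\otimes m)\circ(\mathrm{id}\otimes\tau\otimes\mathrm{id})$. *)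

From HB Require Import structures.
From mathcomp Require Import all_boot all_order all_algebra.
Set Implicit Arguments. Unset Strict Implicit. Unset Printing Implicit Defensive.
Import Order.TTheory GRing.Theory Num.Theory.
Local Open Scope ring_scope.

Section Defs.
Variable k : fieldType.

Definition qint_poly (n : nat) : {poly int} := \sum_(l < n) 'X^l.
Definition qfact_poly (n : nat) : {poly int} := \prod_(j < n) qint_poly j.+1.
Definition qbinom_poly (m i : nat) : {poly int} :=
  qfact_poly m %/ (qfact_poly i * qfact_poly (m - i)).
Definition qbinom (q : k) (m i : nat) : k :=
  (map_poly (fun z : int => z%:~R) (qbinom_poly m i)).[q].

Definition qint (q : k) (n : nat) : k := \sum_(l < n) q ^+ l.

Definition theta (q : k) (f : {poly k}) : {poly k} :=
  \poly_(i < size f) (q ^+ i * f`_i).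
Definition dq (q : k) (f : {poly k}) : {poly k} :=
  \poly_(i < (size f).-1) (qint q i.+1 * f`_i.+1).

(* An element P : {poly {poly k}} of A (x) B (A = k[u], B = k[v]) represents
   sum_i sum_j P`_i`_j u^i (x) v^j ; equivalently sum_i u^i (x) P`_i. *)
Definition tens (a b : {poly k}) : {poly {poly k}} :=
  \poly_(i < size a) (a`_i *: b).

Definition tauq (q : k) (P : {poly {poly k}}) : {poly {poly k}} :=
  \sum_(m < size P) \sum_(i < m.+1)
     tens (qbinom q m i *: iter i (theta q) (iter (m - i) (dq q) P`_m)) 'X^i.

Definition subspace (V : {poly k} -> Prop) : Prop :=
  V 0 /\ (forall a b, V a -> V b -> V (a + b)) /\ (forall c a, V a -> V (c *: a)).

Definition subspace2 (V : {poly {poly k}} -> Prop) : Prop :=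
  V 0 /\ (forall a b, V a -> V b -> V (a + b)) /\
  (forall (c : k) a, V a -> V (c%:P *: a)).

Definition is_ideal (I : {poly k} -> Prop) : Prop :=
  I 0 /\ (forall a b, I a -> I b -> I (a + b)) /\
  (forall a b, I b -> I (a * b)) /\ (forall a b, I a -> I (a * b)).

Definition fin_codim (I : {poly k} -> Prop) : Prop :=
  exists s : seq {poly k}, forall p, exists c : nat -> k,
    I (p - \sum_(i < size s) c i *: s`_i).

Definition cofinite_open (E0 : {poly k} -> Prop) : Prop :=
  subspace E0 /\ exists I, [/\ is_ideal I, fin_codim I & forall p, I p -> E0 p].

Definition tens_sum (E0 F0 : {poly k} -> Prop) (P : {poly {poly k}}) : Prop :=
  exists (s t : seq ({poly k} * {poly k})),
    [/\ forall e, e \in s -> E0 e.1,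
        forall e, e \in t -> F0 e.2 &
        P = \sum_(e <- s) tens e.1 e.2 + \sum_(e <- t) tens e.1 e.2].

(* open subspaces of A (x)^! B, A and B with the cofinite topology *)
Definition tens_open (V : {poly {poly k}} -> Prop) : Prop :=
  subspace2 V /\ exists E0 F0, [/\ cofinite_open E0, cofinite_open F0 &
                                  forall P, tens_sum E0 F0 P -> V P].

Definition tens_continuous (f : {poly {poly k}} -> {poly {poly k}}) : Prop :=
  forall V, tens_open V -> tens_open (fun P => V (f P)).

Definition q_root_of_unity (q : k) : Prop := exists n : nat, (0 < n)%N /\ q ^+ n = 1.

End Defs.

(* If tau_q is continuous, some ideal I of finite codimension in k[y] satisfies
   tau_q (I (x) k[x]) <= ker (constant term).  For 0 != g in I of degree d, the constant
   term of tau_q (g (x) x^d) is [d]_q! lead_coef g, so some [l]_q vanishes: q^l = 1.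
   Conversely, let q be a primitive n-th root of unity.  Then D_q^n = 0 and the
   q-binomials [n, i]_q vanish for 0 < i < n, so x^n and y^n are central in A_1^q;
   hence multiplication by a theta-fixed polynomial, i.e. a polynomial in x^n (or y^n),
   passes through tau_q.  An ideal of finite codimension contains a nonzero g, hence
   the theta-fixed multiple g(x) g(qx) ... g(q^(n-1) x); so tau_q maps
   H k[y] (x) k[x] + k[y] (x) G k[x] into k[x] (x) H k[y] + G k[x] (x) k[y]. *)

From mathcomp Require Import all_boot all_order all_algebra.
From mathcomp Require Import ring zify.

Set Implicit Arguments.
Unset Strict Implicit.
Unset Printing Implicit Defensive.
Import GRing.Theory.
Local Open Scope ring_scope.

Lemma qint_polyD a b : qint_poly (a + b) = qint_poly a + 'X^a * qint_poly b.
Proof.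
rewrite /qint_poly big_split_ord /= big_distrr.
by congr (_ + _); apply: eq_bigr => i _; rewrite exprD.
Qed.

Lemma qint_poly_monic n : qint_poly n.+1 \is monic.
Proof.
have -> : qint_poly n.+1 = \poly_(i < n.+1) 1.
  by rewrite poly_def; apply: eq_bigr => i _; rewrite scale1r.
by rewrite monicE lead_coef_poly // oner_neq0.
Qed.

Lemma qfact_polyS m : qfact_poly m.+1 = qfact_poly m * qint_poly m.+1.
Proof. by rewrite /qfact_poly big_ord_recr. Qed.

Lemma qfact_poly_monic m : qfact_poly m \is monic.
Proof. by apply: monic_prod => i _; apply: qint_poly_monic. Qed.

Lemma qbinom_poly_unique m i B :
  B * (qfact_poly i * qfact_poly (m - i)) = qfact_poly m -> qbinom_poly m i = B.
Proof.
move=> E; rewrite /qbinom_poly -E Pdiv.IdomainMonic.mulpK //.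
by rewrite monicMr ?qfact_poly_monic.
Qed.

Lemma qbinom_poly0 m : qbinom_poly m 0 = 1.
Proof. by apply: qbinom_poly_unique; rewrite subn0 /qfact_poly big_ord0 !mul1r. Qed.

Lemma qbinom_poly_id m : qbinom_poly m m = 1.
Proof. by apply: qbinom_poly_unique; rewrite subnn /qfact_poly big_ord0 mulr1 mul1r. Qed.

(* [m+1]_t = [i+1]_t + t^(i+1) [m-i]_t splits [m+1]_t! along the two Pascal terms. *)
Lemma qbinom_poly_pascal_factorial m i : (i < m)%N ->
  qbinom_poly m i * (qfact_poly i * qfact_poly (m - i)) = qfact_poly m ->
  qbinom_poly m i.+1 * (qfact_poly i.+1 * qfact_poly (m - i.+1)) = qfact_poly m ->
  (qbinom_poly m i + 'X^(i.+1) * qbinom_poly m i.+1) *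
    (qfact_poly i.+1 * qfact_poly (m.+1 - i.+1)) = qfact_poly m.+1.
Proof.
move=> lt_im Em Em'; have mi : (m - i = (m - i.+1).+1)%N by rewrite subnSK.
have -> : qfact_poly m.+1 = qfact_poly m * (qint_poly i.+1 + 'X^(i.+1) * qint_poly (m - i)).
  by rewrite qfact_polyS -qint_polyD addSn subnKC // ltnW.
rewrite mulrDr -{1}Em -Em' subSS mi !qfact_polyS -mi; ring.
Qed.

Lemma qbinom_poly_factorial m i : (i <= m)%N ->
  qbinom_poly m i * (qfact_poly i * qfact_poly (m - i)) = qfact_poly m.
Proof.
elim: m i => [|m IH] [|i] //; rewrite ?qbinom_poly0 ?subn0 /qfact_poly ?big_ord0 ?mul1r //.
rewrite ltnS leq_eqVlt => /orP[/eqP->|lt_im].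
  by rewrite qbinom_poly_id subnn big_ord0 mulr1 mul1r.
have E := qbinom_poly_pascal_factorial lt_im (IH _ (ltnW lt_im)) (IH _ lt_im).
by rewrite (qbinom_poly_unique E) E.
Qed.

Lemma qbinom_polyS m i : (i < m)%N ->
  qbinom_poly m.+1 i.+1 = qbinom_poly m i + 'X^(i.+1) * qbinom_poly m i.+1.
Proof.
move=> lt_im; apply/qbinom_poly_unique/qbinom_poly_pascal_factorial => //.
  exact/qbinom_poly_factorial/ltnW.
exact: qbinom_poly_factorial.
Qed.

Section QCalculus.
Variables (k : fieldType) (q : k).

Definition qfact m := \prod_(j < m) qint q j.+1.

Definition qfall j n := \prod_(l < n) qint q (j + l).+1.

Lemma qfallS j n : qfall j n.+1 = qint q j.+1 * qfall j.+1 n.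
Proof.
rewrite /qfall big_ord_recl addn0; congr (_ * _).
by apply: eq_bigr => l _; rewrite addSnnS.
Qed.

Lemma qfall0 j : qfall j 0 = 1.
Proof. by rewrite /qfall big_ord0. Qed.

Lemma qfall0n n : qfall 0 n = qfact n.
Proof. by apply: eq_bigr => l _; rewrite add0n. Qed.

Lemma qint_eq0 n : q != 1 -> (qint q n == 0) = (q ^+ n == 1).
Proof.
by move=> q_neq1; rewrite /qint -[_ == 1]subr_eq0 subrX1 mulf_eq0 subr_eq0 (negbTE q_neq1).
Qed.

Lemma qint_poly_eval n : (map_poly (fun z : int => z%:~R) (qint_poly n)).[q] = qint q n.
Proof.
rewrite rmorph_sum horner_sum; apply: eq_bigr => i _.
by rewrite rmorphXn /= map_polyX hornerXn.
Qed.

Lemma qfact_poly_eval m : (map_poly (fun z : int => z%:~R) (qfact_poly m)).[q] = qfact m.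
Proof. by rewrite rmorph_prod horner_prod; apply: eq_bigr => j _; rewrite qint_poly_eval. Qed.

Lemma qbinom0 m : qbinom q m 0 = 1.
Proof. by rewrite /qbinom qbinom_poly0 rmorph1 hornerC. Qed.

Lemma qbinom_id m : qbinom q m m = 1.
Proof. by rewrite /qbinom qbinom_poly_id rmorph1 hornerC. Qed.

Lemma qbinomS m i : (i < m)%N ->
  qbinom q m.+1 i.+1 = qbinom q m i + q ^+ i.+1 * qbinom q m i.+1.
Proof.
move=> lt_im; rewrite /qbinom qbinom_polyS // rmorphD rmorphM /=.
by rewrite hornerD hornerM map_polyXn hornerXn.
Qed.

Lemma qbinom_factorial m i : (i <= m)%N ->
  qbinom q m i * (qfact i * qfact (m - i)) = qfact m.
Proof.
move=> le_im; rewrite -!qfact_poly_eval -(qbinom_poly_factorial le_im).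
by rewrite !rmorphM /= !hornerM.
Qed.

Lemma coef_theta f i : (theta q f)`_i = q ^+ i * f`_i.
Proof. by rewrite coef_poly; case: ltnP => // le_fi; rewrite nth_default ?mulr0. Qed.

Lemma coef_dq f i : (dq q f)`_i = qint q i.+1 * f`_i.+1.
Proof.
rewrite coef_poly; case: ltnP => // le_fi.
by rewrite nth_default ?mulr0 //; move: le_fi; case: (size f).
Qed.

Lemma coef_iter_theta m f i : (iter m (theta q) f)`_i = (q ^+ i) ^+ m * f`_i.
Proof. by elim: m => [|m IH]; rewrite ?mul1r //= coef_theta IH exprS mulrA. Qed.

Lemma coef_iter_dq m f i : (iter m (dq q) f)`_i = qfall i m * f`_(i + m).
Proof.
elim: m i => [|m IH] i; first by rewrite qfall0 mul1r addn0.
by rewrite iterS coef_dq IH qfallS mulrA addSnnS.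
Qed.

Lemma thetaM f g : theta q (f * g) = theta q f * theta q g.
Proof.
apply/polyP => j; rewrite coef_theta !coefM mulr_sumr.
apply: eq_bigr => -[i /= le_ij] _; rewrite !coef_theta.
rewrite -[in q ^+ j](subnKC (le_ij : (i <= j)%N)) exprD; ring.
Qed.

Lemma theta1 : theta q 1 = 1.
Proof. by apply/polyP => -[|i]; rewrite coef_theta coef1 ?mulr1 ?mulr0. Qed.

Lemma dq_theta f : (q - 1) *: ('X * dq q f) = theta q f - f.
Proof.
apply/polyP => -[|i]; rewrite coefZ coefXM coefB coef_theta ?expr0 ?mul1r ?subrr ?mulr0 //=.
by rewrite coef_dq mulrA -subrX1 mulrBl mul1r.
Qed.

Section ThetaFixed.
Hypothesis q_neq1 : q != 1.
Variable G : {poly k}.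
Hypothesis thetaG : theta q G = G.

(* x D_q f = (f(qx) - f(x)) / (q - 1), and theta commutes with multiplication by G. *)
Lemma dq_fixedM f : dq q (G * f) = G * dq q f.
Proof.
have q1_neq0 : q - 1 != 0 by rewrite subr_eq0.
have X_neq0 : ('X : {poly k}) != 0 by rewrite polyX_eq0.
apply: (mulfI X_neq0); apply: (scalerI q1_neq0).
by rewrite dq_theta thetaM thetaG mulrCA scalerAr dq_theta mulrBr.
Qed.

Lemma iter_theta_dq_fixedM i m f :
  iter i (theta q) (iter m (dq q) (G * f)) = G * iter i (theta q) (iter m (dq q) f).
Proof.
have -> : iter m (dq q) (G * f) = G * iter m (dq q) f.
  by elim: m => //= m ->; rewrite dq_fixedM.
by elim: i => //= i ->; rewrite thetaM thetaG.
Qed.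

End ThetaFixed.

Lemma theta_fixed_coef G u : theta q G = G -> G`_u != 0 -> q ^+ u = 1.
Proof.
move=> thetaG Gu_neq0; have /eqP := congr1 (fun p : {poly k} => p`_u) thetaG.
rewrite /= coef_theta -subr_eq0 -{2}[G`_u]mul1r -mulrBl mulf_eq0 subr_eq0.
by rewrite (negbTE Gu_neq0) orbF => /eqP.
Qed.

End QCalculus.


Section Twisting.
Variables (k : fieldType) (q : k).

Lemma coef_tens (a b : {poly k}) i : (tens a b)`_i = a`_i *: b.
Proof. by rewrite coef_poly; case: ltnP => // le_ai; rewrite nth_default ?scale0r. Qed.

Lemma tensE (a b : {poly k}) : tens a b = b *: a^:P.
Proof. by apply/polyP => i; rewrite coef_tens coefZ coef_map /= mulrC mul_polyC. Qed.

Lemma tensZl c (a b : {poly k}) : tens (c *: a) b = c%:P *: tens a b.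
Proof. by rewrite !tensE map_polyZ !scalerA mulrC. Qed.

Lemma tens_suml I r (P : pred I) (F : I -> {poly k}) b :
  tens (\sum_(i <- r | P i) F i) b = \sum_(i <- r | P i) tens (F i) b.
Proof. by rewrite tensE rmorph_sum scaler_sumr; apply: eq_bigr => i _; rewrite tensE. Qed.

Lemma tensXn j (c : {poly k}) : tens 'X^j c = c *: 'X^j.
Proof. by rewrite tensE map_polyXn. Qed.

Definition tauqX m f := \sum_(i < m.+1)
  tens (qbinom q m i *: iter i (theta q) (iter (m - i) (dq q) f)) 'X^i.

Lemma coef_tauqX m f j i : (tauqX m f)`_j`_i =
  if (i <= m)%N then qbinom q m i * ((q ^+ j) ^+ i * (qfall q j (m - i) * f`_(j + (m - i))))
  else 0.
Proof.
rewrite !coef_sum; under eq_bigr => l _ do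
  rewrite coef_tens coefZ coefXn mulr_natr mulrb eq_sym coefZ coef_iter_theta coef_iter_dq.
by rewrite -big_mkcond (big_ord1_eq _ (fun l =>
  qbinom q m l * ((q ^+ j) ^+ l * (qfall q j (m - l) * f`_(j + (m - l)))))).
Qed.

Lemma tauqX_linear m c f g : tauqX m (c *: f + g) = c%:P *: tauqX m f + tauqX m g.
Proof.
apply/polyP => j; apply/polyP => i; rewrite !(coefD, coefZ, coefCM, coef_tauqX).
by case: ifP => _; rewrite ?mulr0 ?addr0 //; ring.
Qed.

Lemma tauqX0 m : tauqX m 0 = 0.
Proof.
apply/polyP => j; apply/polyP => i.
by rewrite coef_tauqX !coef0; case: ifP; rewrite ?mulr0.
Qed.

Lemma tauqXZ m c f : tauqX m (c *: f) = c%:P *: tauqX m f.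
Proof. by rewrite -[c *: f]addr0 tauqX_linear tauqX0 addr0. Qed.

Lemma tauqE N (P : {poly {poly k}}) :
  (size P <= N)%N -> tauq q P = \sum_(m < N) tauqX m P`_m.
Proof.
move=> le_PN; rewrite /tauq (big_ord_widen _ (fun m => tauqX m P`_m) le_PN) big_mkcond /=.
by apply: eq_bigr => m _; case: ltnP => // le_Pm; rewrite nth_default ?tauqX0.
Qed.

Lemma tauq_linear c (P P' : {poly {poly k}}) :
  tauq q (c%:P *: P + P') = c%:P *: tauq q P + tauq q P'.
Proof.
have le_sum : (size (c%:P *: P + P')%R <= size P + size P')%N.
  rewrite (leq_trans (size_polyD _ _)) // geq_max leq_addl andbT.
  by rewrite (leq_trans (size_scale_leq _ _)) ?leq_addr.
rewrite (tauqE le_sum) (tauqE (leq_addr (size P') _)) (tauqE (leq_addl (size P) _)).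
rewrite scaler_sumr -big_split; apply: eq_bigr => m _.
by rewrite coefD coefZ mul_polyC tauqX_linear.
Qed.

Lemma tauq0 : tauq q 0 = 0.
Proof. by rewrite /tauq size_poly0 big_ord0. Qed.

Lemma tauqD (P P' : {poly {poly k}}) : tauq q (P + P') = tauq q P + tauq q P'.
Proof. by have := tauq_linear 1 P P'; rewrite polyC1 !scale1r. Qed.

Lemma tauqZ c (P : {poly {poly k}}) : tauq q (c%:P *: P) = c%:P *: tauq q P.
Proof. by rewrite -[_ *: P]addr0 tauq_linear tauq0 addr0. Qed.

Lemma tauq_sum I r (P : pred I) (F : I -> {poly {poly k}}) :
  tauq q (\sum_(i <- r | P i) F i) = \sum_(i <- r | P i) tauq q (F i).
Proof. exact: (big_morph _ tauqD tauq0). Qed.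

Lemma tauq_tens N (a b : {poly k}) : (size a <= N)%N ->
  tauq q (tens a b) = \sum_(m < N) (a`_m)%:P *: tauqX m b.
Proof.
move=> le_aN; rewrite (tauqE (leq_trans (size_poly _ _) le_aN)).
by apply: eq_bigr => m _; rewrite coef_tens tauqXZ.
Qed.

(* Left multiplication by y in A_1^q, on normal forms sum_j x^j (x) R_j,
   computed with y x^j = q^j x^j y + [j]_q x^(j-1). *)
Definition lmulY (R : {poly {poly k}}) : {poly {poly k}} :=
  \poly_(j < size R) (q ^+ j *: ('X * R`_j) + qint q j.+1 *: R`_j.+1).

Lemma coef_lmulY R j : (lmulY R)`_j = q ^+ j *: ('X * R`_j) + qint q j.+1 *: R`_j.+1.
Proof.
rewrite coef_poly; case: ltnP => // le_Rj.
by rewrite !nth_default ?mulr0 ?scaler0 ?addr0 // (leq_trans le_Rj).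
Qed.

Lemma lmulYZ (c : {poly k}) R : lmulY (c *: R) = c *: lmulY R.
Proof.
apply/polyP => j; rewrite coefZ !coef_lmulY !coefZ mulrDr.
by rewrite -!scalerAr mulrCA.
Qed.

Lemma iter_lmulYZ m (c : {poly k}) R : iter m lmulY (c *: R) = c *: iter m lmulY R.
Proof. by elim: m => //= m ->; rewrite lmulYZ. Qed.

Lemma tauqXS m f : tauqX m.+1 f = lmulY (tauqX m f).
Proof.
apply/polyP => j; apply/polyP => -[|i].
  rewrite coef_lmulY coefD !coefZ coefXM !coef_tauqX /= !qbinom0 !expr0 !subn0.
  by rewrite qfallS -addSnnS mulr0 add0r !mul1r mulrA.
rewrite coef_lmulY coefD !coefZ coefXM !coef_tauqX /= ltnS.
case: (ltngtP i m) => [lt_im|lt_mi|->].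
- rewrite subSS -(subnSK lt_im) qfallS qbinomS // -addSnnS addSn.
  rewrite [q ^+ j.+1]exprS exprMn [q ^+ j ^+ i.+1]exprS; ring.
- by rewrite !mulr0 addr0.
by rewrite !subnn !qbinom_id !qfall0 !addn0 !mul1r mulr0 addr0 exprS mulrA.
Qed.

Lemma tauqX_iter m f : tauqX m f = iter m lmulY (tens f 1).
Proof.
elim: m => [|m IH]; last by rewrite tauqXS IH.
by rewrite /tauqX big_ord1 qbinom_id scale1r.
Qed.

End Twisting.


Section ThetaNorm.
Variables (k : fieldType) (q : k).

Definition theta_norm n (g : {poly k}) := \prod_(j < n) iter j (theta q) g.

Lemma theta_norm_fixed n g : q ^+ n = 1 -> theta q (theta_norm n g) = theta_norm n g.
Proof.
rewrite /theta_norm (big_morph _ (thetaM q) (theta1 q)).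
case: n => [|n] qn1; first by rewrite !big_ord0.
rewrite big_ord_recr big_ord_recl /= mulrC; congr (_ * _).
by rewrite -iterS; apply/polyP => i; rewrite coef_iter_theta exprAC qn1 expr1n mul1r.
Qed.

Lemma theta_norm_neq0 n g : q != 0 -> g != 0 -> theta_norm n g != 0.
Proof.
move=> q_neq0 g_neq0; apply/prodf_neq0 => j _; apply: contraNneq g_neq0 => iter0.
have /eqP := congr1 (fun p : {poly k} => p`_(size g).-1) iter0.
rewrite coef_iter_theta coef0 mulf_eq0 !expf_eq0 (negbTE q_neq0) !andbF /=.
by rewrite -lead_coefE lead_coef_eq0.
Qed.

Lemma dvdp_theta_norm n g : (0 < n)%N -> g %| theta_norm n g.
Proof. by case: n => // n _; rewrite /theta_norm big_ord_recl dvdp_mulIl. Qed.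

End ThetaNorm.

Section CofiniteTopology.
Variable k : fieldType.

Lemma ideal_dvdp (I : {poly k} -> Prop) g p : is_ideal I -> I g -> g %| p -> I p.
Proof. by move=> [_ [_ [mulI _]]] Ig /dvdpP[r ->]; apply: mulI. Qed.

(* x^N, with N beyond the degrees of a spanning family, survives reduction modulo it. *)
Lemma fin_codim_neq0 (I : {poly k} -> Prop) : fin_codim I -> exists2 g, g != 0 & I g.
Proof.
move=> [s span]; set N := (\max_(i < size s) size (s`_i)%R)%N.
have [c Ic] := span 'X^N; exists ('X^N - \sum_(i < size s) c i *: s`_i) => //.
apply/eqP => /polyP /(_ N) /eqP; rewrite coefB coefXn eqxx coef_sum coef0.
rewrite big1 ?subr0 ?oner_eq0 // => i _.
by rewrite coefZ nth_default ?mulr0 // (leq_bigmax i).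
Qed.

Lemma principal_cofinite_open (G : {poly k}) : G != 0 -> cofinite_open (fun p => G %| p).
Proof.
move=> G_neq0; have idG : is_ideal (fun p => G %| p).
  split; first exact: dvdp0.
  split; first exact: dvdp_add.
  by split=> a b; [apply: dvdp_mull | apply: dvdp_mulr].
split.
  split; first exact: dvdp0.
  by split=> [|c a]; [exact: dvdp_add | rewrite -mul_polyC; exact: dvdp_mull].
exists (fun p => G %| p); split=> //; exists (mkseq (fun i => 'X^i) (size G)) => p.
exists (fun i => (p %% G)`_i); rewrite size_mkseq.
have -> : \sum_(i < size G) (p %% G)`_i *: (mkseq (fun i => 'X^i) (size G))`_i = p %% G.
  under eq_bigr => i _ do rewrite nth_mkseq //.
  rewrite -(poly_def (size G) (fun i => (p %% G)`_i)); apply/polyP => i.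
  rewrite coef_poly; case: ltnP => // le_Gi.
  by rewrite nth_default // (leq_trans _ le_Gi) // ltnW // ltn_modp.
by rewrite {1}(divp_eq p G) addrK dvdp_mull.
Qed.

Lemma tens_sum_tensl (E0 F0 : {poly k} -> Prop) a b : E0 a -> tens_sum E0 F0 (tens a b).
Proof.
move=> E0a; exists [:: (a, b)], [::]; split=> // [e|].
  by rewrite mem_seq1 => /eqP ->.
by rewrite big_seq1 big_nil addr0.
Qed.

Lemma tens_sum_scale (E0 F0 : {poly k} -> Prop) H Q :
  (forall p, H %| p -> F0 p) -> tens_sum E0 F0 (H *: Q).
Proof.
move=> HF0; exists [::], [seq ('X^j, H * Q`_j) | j <- iota 0 (size Q)].
split=> // [e /mapP[j _ ->]|]; first exact/HF0/dvdp_mulIl.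
rewrite big_nil add0r big_map -{1}[Q]coefK poly_def.
rewrite -(big_mkord xpredT (fun j => Q`_j *: 'X^j)) scaler_sumr /index_iota subn0.
by apply: eq_bigr => j _; rewrite tensXn scalerA.
Qed.

Lemma coef00_tens_sum (E0 F0 : {poly k} -> Prop) P :
  (forall a, E0 a -> a`_0 = 0) -> (forall b, F0 b -> b`_0 = 0) ->
  tens_sum E0 F0 P -> P`_0`_0 = 0.
Proof.
move=> E00 F00 [s [t [sE0 tF0 ->]]]; rewrite !(coefD, coef_sum).
rewrite !big1_seq ?addr0 // => e /andP[_ e_in]; rewrite coef_tens coefZ.
- by rewrite (F00 e.2) ?mulr0 //; apply: tF0.
- by rewrite (E00 e.1) ?mul0r //; apply: sE0.
Qed.

Lemma tens_open_coef00 : tens_open (fun P : {poly {poly k}} => P`_0`_0 = 0).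
Proof.
split.
  split; first by rewrite !coef0.
  by split=> [P P' P0 P'0 | c P P0]; rewrite ?coefD ?coefZ ?coefCM ?P0 ?P'0 ?addr0 ?mulr0.
have X_neq0 : ('X : {poly k}) != 0 by rewrite polyX_eq0.
have X0 (p : {poly k}) : 'X %| p -> p`_0 = 0 by move=> /dvdpP[r ->]; rewrite coefMX.
exists (fun p => 'X %| p), (fun p => 'X %| p).
by split=> [||P]; [exact: principal_cofinite_open.. | apply: coef00_tens_sum].
Qed.

End CofiniteTopology.

Section RootOfUnity.
Variables (k : fieldType) (q : k) (n : nat).
Hypotheses (q_neq0 : q != 0) (q_neq1 : q != 1) (prim_q : n.-primitive_root q).

Let n_gt0 := prim_order_gt0 prim_q.
Let qn1 := prim_expr_order prim_q.

Lemma qfall_order j : qfall q j n = 0.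
Proof.
have lt_l : (n.-1 - j %% n < n)%N by lia.
rewrite /qfall (bigD1 (Ordinal lt_l)) //=; apply/eqP; rewrite mulf_eq0 qint_eq0 //.
have -> : ((j + (n.-1 - j %% n)).+1 = (j %/ n).+1 * n)%N.
  by have := divn_eq j n; have := ltn_mod j n; rewrite n_gt0 mulSn; lia.
by rewrite -(prim_order_dvd prim_q) dvdn_mull.
Qed.

Lemma qfact_neq0 l : (l < n)%N -> qfact q l != 0.
Proof.
move=> lt_ln; apply/prodf_neq0 => j _.
by rewrite qint_eq0 // -(prim_order_dvd prim_q) gtnNdvd // (leq_ltn_trans (ltn_ord j)).
Qed.

Lemma qbinom_order i : (0 < i < n)%N -> qbinom q n i = 0.
Proof.
case/andP => i_gt0 lt_in; have := qbinom_factorial q (ltnW lt_in).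
rewrite -[qfact q n]qfall0n qfall_order => /eqP; rewrite !mulf_eq0 (negbTE (qfact_neq0 lt_in)).
by rewrite (negbTE (qfact_neq0 _)) ?orbF => [/eqP|]; last lia.
Qed.

Lemma tauqX_order f : tauqX q n f = 'X^n *: tens f 1.
Proof.
apply/polyP => j; apply/polyP => i.
rewrite coef_tauqX coefZ coef_tens -scalerAr mulr1 coefZ coefXn.
case: (ltngtP i n) => [lt_in|lt_ni|->]; rewrite ?mulr0 //.
  case: i lt_in => [|i] lt_in; first by rewrite subn0 qfall_order mul0r !mulr0.
  by rewrite qbinom_order ?mul0r.
by rewrite subnn qbinom_id qfall0 addn0 exprAC qn1 expr1n !mul1r mulr1.
Qed.

Lemma tauqX_unity u f : q ^+ u = 1 -> tauqX q u f = 'X^u *: tens f 1.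
Proof.
move=> /eqP; rewrite -(prim_order_dvd prim_q) => /dvdnP[t ->].
elim: t => [|t IH]; first by rewrite mul0n expr0 scale1r tauqX_iter.
rewrite tauqX_iter mulSn iterD -tauqX_iter IH iter_lmulYZ -tauqX_iter tauqX_order.
by rewrite scalerA -exprD addnC.
Qed.

Lemma tauqXD_unity u v f : q ^+ u = 1 -> tauqX q (u + v) f = 'X^u *: tauqX q v f.
Proof.
by move=> qu1; rewrite !tauqX_iter addnC iterD -tauqX_iter tauqX_unity // iter_lmulYZ.
Qed.

Lemma tauq_tens_mulXn u r b : q ^+ u = 1 ->
  tauq q (tens ('X^u * r) b) = 'X^u *: tauq q (tens r b).
Proof.
move=> qu1; have le_size : (size ('X^u * r)%R <= u + size r)%N.
  by rewrite (leq_trans (size_polyMleq _ _)) // size_polyXn.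
rewrite (tauq_tens q b le_size) big_split_ord /= big1 ?add0r => [|m _]; last first.
  by rewrite coefXnM ltn_ord polyC0 scale0r.
rewrite (tauq_tens q b (leqnn (size r))) scaler_sumr; apply: eq_bigr => v _.
by rewrite coefXnM ltnNge leq_addr /= addKn tauqXD_unity // !scalerA mulrC.
Qed.

(* A theta-fixed H(y) is a polynomial in the central element y^n of A_1^q. *)
Lemma tauq_tens_fixedMl H r b : theta q H = H ->
  tauq q (tens (H * r) b) = H *: tauq q (tens r b).
Proof.
move=> thetaH; rewrite -[H in LHS]coefK -[H in RHS]coefK !poly_def mulr_suml.
rewrite tens_suml tauq_sum scaler_suml; apply: eq_bigr => u _.
rewrite -scalerAl tensZl tauqZ -[H`_u *: 'X^u]mul_polyC -scalerA.
have [->|/(theta_fixed_coef thetaH) qu1] := eqVneq H`_u 0; first by rewrite polyC0 !scale0r.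
by rewrite tauq_tens_mulXn.
Qed.

Lemma cofinite_open_theta_fixed E : cofinite_open E ->
  exists2 G, G != 0 /\ theta q G = G & forall p, G %| p -> E p.
Proof.
move=> [_ [I [idI codimI IE]]]; have [g g_neq0 Ig] := fin_codim_neq0 codimI.
exists (theta_norm q n g); first by rewrite theta_norm_neq0 ?theta_norm_fixed.
by move=> p /(dvdp_trans (dvdp_theta_norm _ _ n_gt0)) /(ideal_dvdp idI Ig) /IE.
Qed.

Section Membership.
Variables (V : {poly {poly k}} -> Prop) (E0 F0 : {poly k} -> Prop).
Hypotheses (subV : subspace2 V) (sumV : forall P, tens_sum E0 F0 P -> V P).

Lemma tauq_tens_fixedMl_mem H r b :
  (forall p, H %| p -> F0 p) -> theta q H = H -> V (tauq q (tens (H * r) b)).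
Proof. by move=> HF0 thetaH; rewrite tauq_tens_fixedMl //; apply/sumV/tens_sum_scale. Qed.

Lemma tauq_tens_fixedMr_mem G a r :
  (forall p, G %| p -> E0 p) -> theta q G = G -> V (tauq q (tens a (G * r))).
Proof.
have [V0 [VD _]] := subV; move=> GE0 thetaG.
apply: (big_ind V) => // m _; apply: (big_ind V) => // i _.
apply/sumV/tens_sum_tensl/GE0.
by rewrite coef_tens scalerAr iter_theta_dq_fixedM // scalerAr dvdp_mulIl.
Qed.

End Membership.

Lemma subspace2_tauq V : subspace2 V -> subspace2 (fun P => V (tauq q P)).
Proof.
move=> [V0 [VD VZ]]; split; first by rewrite tauq0.
by split=> [P P' VP VP'|c P VP]; rewrite ?tauqD ?tauqZ; auto.
Qed.

Lemma tauq_continuous_of_primitive_root : tens_continuous (tauq q).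
Proof.
move=> V [subV [E0 [F0 [openE0 openF0 sumV]]]].
have [G [G_neq0 thetaG] GE0] := cofinite_open_theta_fixed openE0.
have [H [H_neq0 thetaH] HF0] := cofinite_open_theta_fixed openF0.
split; first exact: subspace2_tauq.
exists (fun p => H %| p), (fun p => G %| p); split; try exact: principal_cofinite_open.
move=> P [s [t [sH tG ->]]]; have [V0 [VD _]] := subV.
rewrite tauqD !tauq_sum; apply: (VD _ _); rewrite big_seq; apply: (big_ind V) => // e.
  by move=> /sH /dvdpP[r ->]; rewrite mulrC; exact: (tauq_tens_fixedMl_mem sumV _ _ HF0 thetaH).
by move=> /tG /dvdpP[r ->]; rewrite mulrC; exact: (tauq_tens_fixedMr_mem subV sumV _ _ GE0 thetaG).
Qed.

End RootOfUnity.

Section Necessity.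
Variables (k : fieldType) (q : k).

Lemma coef00_tauq_tensXn (a : {poly k}) d : (d < size a)%N ->
  (tauq q (tens a 'X^d))`_0`_0 = qfact q d * a`_d.
Proof.
move=> lt_da; rewrite (tauq_tens _ _ (leqnn _)) !coef_sum (bigD1 (Ordinal lt_da)) //=.
rewrite big1 ?addr0 => [|m /negbTE m_neq_d]; rewrite coefZ coefCM coef_tauqX /= qbinom0.
  by rewrite !expr0 subn0 qfall0n coefXn eqxx mulr1 !mul1r mulrC.
by rewrite coefXn subn0 add0n -val_eqE /= in m_neq_d *; rewrite m_neq_d !mulr0.
Qed.

Lemma root_of_unity_of_tauq_continuous :
  q != 1 -> tens_continuous (tauq q) -> q_root_of_unity q.
Proof.
move=> q_neq1 cont.
have [_ [E0 [F0 [[_ [I [_ codimI IE0]]] _ sumV]]]] := cont _ (tens_open_coef00 k).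
have [g g_neq0 Ig] := fin_codim_neq0 codimI.
have := sumV _ (tens_sum_tensl F0 'X^((size g).-1) (IE0 _ Ig)).
rewrite /= coef00_tauq_tensXn ?prednK ?size_poly_gt0 // => /eqP.
rewrite mulf_eq0 -lead_coefE lead_coef_eq0 (negbTE g_neq0) orbF prodf_seq_eq0.
by case/hasP=> l _ /=; rewrite qint_eq0 // => /eqP ql1; exists l.+1.
Qed.

End Necessity.

Unset Implicit Arguments.

Theorem lemma5p1 (k : fieldType) (q : k) (hq0 : q != 0) (hq1 : q != 1) :
  tens_continuous (tauq q) <-> q_root_of_unity q.
Proof.
split; first exact: root_of_unity_of_tauq_continuous.
case=> m [m_gt0 qm1]; have [n prim_q _] := prim_order_exists m_gt0 qm1.
exact: tauq_continuous_of_primitive_root hq0 hq1 prim_q.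
Qed.
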